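(* In the roundabout exploration process described in the context, let $t\in[N]$ and let $r$ be an integer with $N\ge r\ge 2k+1$. If $|A(t)|\ge r$, then \[t\le\frac{2N-r}{r-2k}.\]
   Context: Let $n\ge 2$ and $k$ be natural numbers, $T$ a tree on an $n$-element vertex set $V$, and $N=2(n-1)$. Fix a root $r_0$ and a DFS tour of $T$ starting and ending at $r_0$ that traverses each edge of $T$ exactly twice, giving a cyclic vertex sequence $(v_1,\dots,v_N,v_{N+1})$ with $v_{N+1}=v_1=r_0$, and tour edges $e_i=\{v_i,v_{i+1}\}$ for $i\in[N]$. For $i,j\in[N]$ the circular interval $[\![i,j]\!]$ is $\{i,i+1,\dots,j\}$ if $i\le j$ and $\{i,\dots,N,1,\dots,j\}$ if $i>j$. Let $\langle G_1,\dots,G_N\rangle$ be graphs on $V$, each containing all but at most $k$ edges of $T$. Roundabout exploration process: agents $a_1,\dots,a_N$ with initial states $s_i(0)=i$. For steps $t=1,\dots,N$: (Movement) for every $i\in[N]$, if $s_i(t-1)=q$ then $s_i(t)=(q\bmod N)+1$ if $e_q\in E(G_t)$, and $s_i(t)=q$ otherwise. Let $D_i(t)=[\![i,s_i(t)]\!]$ and $D_i(0)=\{i\}$. (Elimination) $A(0)=\{a_1,\dots,a_N\}$; $A(t)$ is obtained from $A(t-1)$ by repeatedly removing an arbitrary agent $a_i$ of the current set with $D_i(t)\subseteq\bigcup D_j(t)$ over the other agents $a_j$ of the current set, until no such agent remains. *)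

From mathcomp Require Import all_boot all_order all_algebra.
Set Implicit Arguments. Unset Strict Implicit. Unset Printing Implicit Defensive.

(* Tour positions / agents are indexed by 'I_N, 0-based: index q : 'I_N
   stands for the paper's index q+1. *)

Section Defs.
Variable V : finType.

Definition is_graph (E : {set {set V}}) : Prop := forall e, e \in E -> #|e| = 2.

Definition adj (E : {set {set V}}) : rel V := fun x y => [set x; y] \in E.

Definition has_cycle (E : {set {set V}}) : Prop :=
  exists c : seq V, [/\ 3 <= size c, uniq c & cycle (adj E) c].

Definition is_tree (E : {set {set V}}) : Prop :=
  [/\ is_graph E, (forall x y, connect (adj E) x y) & ~ has_cycle E].

Variable N : nat.
Variable v : nat -> V.   (* v q = paper's v_{q+1}, q = 0..N *)

Definition tour_edge (q : 'I_N) : {set V} := [set v q; v q.+1].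

Definition is_tour (T : {set {set V}}) (r0 : V) : Prop :=
  [/\ v 0 = r0, v N = r0,
      (forall q : 'I_N, tour_edge q \in T) &
      (forall e, e \in T -> #|[set q : 'I_N | tour_edge q == e]| = 2)].

Definition cinterval (i j : 'I_N) : {set 'I_N} :=
  [set x : 'I_N | if i <= j then (i <= x) && (x <= j) else (i <= x) || (x <= j)].

Variable G : nat -> {set {set V}}.  (* G t = G_t, for t = 1..N *)

Fixpoint pos (t : nat) (i : 'I_N) : 'I_N :=
  match t with
  | 0 => i
  | t'.+1 => let q := pos t' i in
             if tour_edge q \in G t'.+1 then ordS q else q
  end.

Definition Dset (t : nat) (i : 'I_N) : {set 'I_N} := cinterval i (pos t i).

Definition elim_step (t : nat) : rel {set 'I_N} := fun S S' =>
  [exists i in S, (Dset t i \subset \bigcup_(j in S :\ i) Dset t j) && (S' == S :\ i)].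

Definition elim_stable (t : nat) (S : {set 'I_N}) : bool :=
  [forall i in S, ~~ (Dset t i \subset \bigcup_(j in S :\ i) Dset t j)].

Definition elim_result (t : nat) (S S' : {set 'I_N}) : Prop :=
  connect (elim_step t) S S' /\ elim_stable t S'.

Definition valid_run (A : nat -> {set 'I_N}) : Prop :=
  A 0 = setT /\ forall t, 1 <= t <= N -> elim_result t (A t.-1) (A t).

End Defs.

From mathcomp Require Import all_boot all_order all_algebra zify.
Set Implicit Arguments. Unset Strict Implicit. Unset Printing Implicit Defensive.
Import Order.TTheory GRing.Theory Num.Theory.

(* At time t the surviving arcs D_i(t) form an irredundant family of circular
   intervals, so every tour position lies in at most two of them and
   sum_i |D_i(t)| <= 2N.  The arc of an agent has one more element than the
   number of steps in which it advanced.  Two survivors never share a position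
   (their arcs would be nested), and since each of the at most k missing tree
   edges occurs twice on the tour, at most 2k positions are blocked at any
   step: so at each of the t steps at least |A(t)| - 2k survivors advance.
   Altogether |A(t)| + t (|A(t)| - 2k) <= 2N. *)

(* The index attaining neither maximum is dominated by the other two. *)
Lemma dominated_of_three (a1 a2 a3 b1 b2 b3 : nat) :
  [\/ (a1 <= maxn a2 a3) && (b1 <= maxn b2 b3),
      (a2 <= maxn a1 a3) && (b2 <= maxn b1 b3) |
      (a3 <= maxn a1 a2) && (b3 <= maxn b1 b2)].
Proof.
case: (leqP a1 (maxn a2 a3)); case: (leqP b1 (maxn b2 b3));
case: (leqP a2 (maxn a1 a3)); case: (leqP b2 (maxn b1 b3));
case: (leqP a3 (maxn a1 a2)); case: (leqP b3 (maxn b1 b2)); move=> *;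
  try (by constructor 1); try (by constructor 2); try (by constructor 3); lia.
Qed.

Section CircularIntervals.
Variable N : nat.
Implicit Types i j p q x y : 'I_N.

Definition cdist (a b : nat) : nat := if a <= b then b - a else b + N - a.

Lemma cdist_lt i y : cdist i y < N.
Proof. by rewrite /cdist; have := ltn_ord i; have := ltn_ord y; case: (leqP i y); lia. Qed.

Lemma cdist_inj i : injective (cdist i : 'I_N -> nat).
Proof.
move=> y z; rewrite /cdist => e; apply: val_inj => /=.
by move: e; have := ltn_ord i; have := ltn_ord y; have := ltn_ord z;
  case: (leqP i y); case: (leqP i z); lia.
Qed.

Lemma cdist_ordS i q : (cdist i q).+1 < N -> cdist i (ordS q) = (cdist i q).+1.
Proof.
have -> : ordS q = q.+1 %% N :> nat by [].
rewrite /cdist; have := ltn_ord i; have qN := ltn_ord q.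
case: (ltnP q.+1 N) => hq; last have -> : q.+1 = N by lia.
  by rewrite modn_small //; case: (leqP i q); case: (leqP i q.+1); lia.
by rewrite modnn; case: (leqP i q); case: (leqP i 0); lia.
Qed.

Lemma mem_cinterval i j y : (y \in cinterval i j) = (cdist i y <= cdist i j).
Proof.
rewrite /cinterval inE /cdist.
have := ltn_ord i; have := ltn_ord j; have := ltn_ord y.
by case: (leqP i j); case: (leqP i y); move=> *; apply/idP/idP; lia.
Qed.

Lemma mem_cinterval_split i j x y : x \in cinterval i j ->
  (y \in cinterval i j) = (cdist x y <= cdist x j) || (cdist y x <= cdist i x).
Proof.
rewrite !mem_cinterval /cdist.
have := ltn_ord i; have := ltn_ord j; have := ltn_ord y; have := ltn_ord x.
case: (leqP i j); case: (leqP i y); case: (leqP i x);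
case: (leqP x y); case: (leqP x j); case: (leqP y x); move=> *; apply/idP/idP; lia.
Qed.

Lemma card_cinterval i j : #|cinterval i j| = (cdist i j).+1.
Proof.
pose d y : 'I_N := Ordinal (cdist_lt i y).
have d_inj : injective d by move=> y z /(congr1 val) /cdist_inj.
have -> : cinterval i j = d @^-1: [set y : 'I_N | y <= cdist i j].
  by apply/setP => y; rewrite mem_cinterval !inE.
rewrite card_preimset //; have cN := cdist_lt i j.
have -> : [set y : 'I_N | y <= cdist i j] = widen_ord cN @: 'I_(cdist i j).+1.
  apply/setP => y; rewrite inE; apply/idP/imsetP => [yc | [z _ ->]]; last exact: ltn_ord z.
  by exists (Ordinal (yc : y < (cdist i j).+1)) => //; apply: val_inj.
rewrite card_imset ?card_ord //.
by move=> a b /(congr1 val) ab; apply: val_inj.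
Qed.

Lemma cinterval_subset i j p : cdist i p <= cdist j p -> cinterval i p \subset cinterval j p.
Proof.
move=> ij; apply/subsetP => y.
have p_in k : p \in cinterval k p by rewrite mem_cinterval.
by rewrite (mem_cinterval_split _ (p_in i)) (mem_cinterval_split _ (p_in j)); lia.
Qed.

Lemma cinterval_subsetU i1 j1 i2 j2 i3 j3 x :
  x \in cinterval i1 j1 -> x \in cinterval i2 j2 -> x \in cinterval i3 j3 ->
  cdist i1 x <= maxn (cdist i2 x) (cdist i3 x) ->
  cdist x j1 <= maxn (cdist x j2) (cdist x j3) ->
  cinterval i1 j1 \subset cinterval i2 j2 :|: cinterval i3 j3.
Proof.
move=> x1 x2 x3 back fwd; apply/subsetP => y.
by rewrite in_setU (mem_cinterval_split y x1) (mem_cinterval_split y x2)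
  (mem_cinterval_split y x3); lia.
Qed.

Lemma cinterval_cover3 i1 j1 i2 j2 i3 j3 x :
  x \in cinterval i1 j1 -> x \in cinterval i2 j2 -> x \in cinterval i3 j3 ->
  [\/ cinterval i1 j1 \subset cinterval i2 j2 :|: cinterval i3 j3,
      cinterval i2 j2 \subset cinterval i1 j1 :|: cinterval i3 j3 |
      cinterval i3 j3 \subset cinterval i1 j1 :|: cinterval i2 j2].
Proof.
move=> x1 x2 x3.
case: (dominated_of_three (cdist i1 x) (cdist i2 x) (cdist i3 x)
                           (cdist x j1) (cdist x j2) (cdist x j3)) => /andP[back fwd].
- by constructor 1; apply: cinterval_subsetU x1 x2 x3 back fwd.
- by constructor 2; apply: cinterval_subsetU x2 x1 x3 back fwd.
- by constructor 3; apply: cinterval_subsetU x3 x1 x2 back fwd.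
Qed.

End CircularIntervals.

Section DoubleCounting.
Variables I T : finType.

Lemma sum_card_le (D : I -> {set T}) (S : {set I}) m :
  (forall x, #|[set i in S | x \in D i]| <= m) -> \sum_(i in S) #|D i| <= #|T| * m.
Proof.
move=> bound_m.
have -> : \sum_(i in S) #|D i| = \sum_x #|[set i in S | x \in D i]|.
  under eq_bigr => i _ do rewrite -sum1_card.
  rewrite (exchange_big_dep predT) //=; apply: eq_bigr => x _.
  exact: sum1dep_card.
apply: (@leq_trans (\sum_(x : T) m)); first exact: leq_sum.
by rewrite sum_nat_const.
Qed.

Lemma card_preimset_le (f : I -> T) (B : {set T}) m :
  (forall e, e \in B -> #|f @^-1: [set e]| <= m) -> #|f @^-1: B| <= #|B| * m.
Proof.
move=> fiber_m; rewrite -sum_nat_const -sum1_card.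
rewrite (partition_big f (fun e => e \in B)) => [|i]; last by rewrite inE.
apply: leq_sum => e eB; apply: leq_trans (fiber_m e eB).
rewrite -sum1_card; apply: eq_leq; apply: eq_bigl => i.
by rewrite !inE andb_idl // => /eqP ->.
Qed.

End DoubleCounting.

Section Irredundant.
Variables (I T : finType) (D : I -> {set T}).

Definition irredundant (S : {set I}) : bool :=
  [forall i in S, ~~ (D i \subset \bigcup_(j in S :\ i) D j)].

Lemma irredundant_subsetU S i j k : irredundant S ->
  i \in S -> j \in S -> k \in S -> i != j -> i != k -> ~~ (D i \subset D j :|: D k).
Proof.
move=> /forall_inP/(_ i) irrS iS jS kS ij ik; apply: contra (irrS iS) => sub.
apply: (subset_trans sub); rewrite subUset.
by apply/andP; split; apply: bigcup_sup; rewrite !inE 1?eq_sym ?ij ?ik.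
Qed.

Lemma irredundant_subset S i j : irredundant S ->
  i \in S -> j \in S -> i != j -> ~~ (D i \subset D j).
Proof. by move=> irrS iS jS ij; rewrite -[D j]setUid (irredundant_subsetU irrS). Qed.

End Irredundant.

Section IrredundantCircular.
Variables (N : nat) (p : 'I_N -> 'I_N).
Local Notation D := (fun i => cinterval i (p i)).

Lemma irredundant_cinterval_count S x : irredundant D S ->
  #|[set i in S | x \in D i]| <= 2.
Proof.
move=> irrS; rewrite leqNgt; apply/card_gt2P => -[i1 [i2 [i3 [[]]]]].
move=> /setIdP[S1 x1] /setIdP[S2 x2] /setIdP[S3 x3] [n12 n23 n31].
case: (cinterval_cover3 x1 x2 x3); apply/negP.
- by apply: (irredundant_subsetU irrS) => //; rewrite eq_sym.
- by apply: (irredundant_subsetU irrS) => //; rewrite eq_sym.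
- by apply: (irredundant_subsetU irrS) => //; rewrite eq_sym.
Qed.

Lemma irredundant_cinterval_sum S : irredundant D S -> \sum_(i in S) #|D i| <= N * 2.
Proof.
move=> irrS; rewrite -[N in N * 2]card_ord.
by apply: sum_card_le => x; apply: irredundant_cinterval_count.
Qed.

Lemma irredundant_cinterval_inj S : irredundant D S -> {in S &, injective p}.
Proof.
move=> irrS i j iS jS pij; apply/eqP; apply: contraT => ij.
case/orP: (leq_total (cdist N i (p j)) (cdist N j (p j))) => le_ij.
- by case/negP: (irredundant_subset irrS iS jS ij); rewrite pij cinterval_subset.
- rewrite eq_sym in ij.
  by case/negP: (irredundant_subset irrS jS iS ij); rewrite pij cinterval_subset.
Qed.

End IrredundantCircular.

Section Exploration.
Variables (V : finType) (N : nat) (v : nat -> V) (G : nat -> {set {set V}}).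
Local Notation pos := (@pos V N v G).
Local Notation Dset := (@Dset V N v G).
Local Notation edge := (@tour_edge V N v).
Local Notation blocked t := [set q : 'I_N | edge q \notin G t].

Definition moved t i : bool := edge (pos t i) \in G t.+1.

Fixpoint moves t i : nat := if t is u.+1 then moves u i + moved u i else 0.

Lemma moves_le t i : moves t i <= t.
Proof. by elim: t => //= t IHt; case: (moved t i); lia. Qed.

Lemma cdist_pos t i : moves t i < N -> cdist N i (pos t i) = moves t i.
Proof.
elim: t => [|t IHt] /=; first by rewrite /cdist leqnn subnn.
rewrite /moved; case: (edge _ \in _) => /= lt_moves; last by rewrite addn0 IHt //; lia.
by rewrite cdist_ordS IHt 1?addn1 //; lia.
Qed.

Lemma card_Dset t i : moves t i < N -> #|Dset t i| = (moves t i).+1.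
Proof. by move=> lt_moves; rewrite card_cinterval cdist_pos. Qed.

Lemma card_blocked T r0 E k : is_tour N v T r0 -> #|T :\: E| <= k ->
  #|[set q | edge q \notin E]| <= k * 2.
Proof.
case=> _ _ edgeT twice missing; apply: leq_trans (leq_mul missing (leqnn 2)).
have -> : [set q | edge q \notin E] = edge @^-1: (T :\: E).
  by apply/setP => q; rewrite !inE edgeT andbT.
apply: card_preimset_le => e /setDP[eT _].
by rewrite -(twice e eT) subset_leq_card //; apply/subsetP => q; rewrite !inE.
Qed.

Lemma elim_connect_subset t (S S' : {set 'I_N}) :
  connect (elim_step v G t) S S' -> S' \subset S.
Proof.
case/connectP => s; elim: s S => [|S1 s IHs] S /=; first by move=> _ ->.
case/andP => /existsP[i /and3P[_ _ /eqP ->]] path_s /(IHs _ path_s).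
by move/subset_trans; apply; apply: subsetDl.
Qed.

Section ValidRun.
Variable A : nat -> {set 'I_N}.
Hypothesis runA : valid_run v G A.

Lemma valid_run_subset u t : u <= t <= N -> A t \subset A u.
Proof.
case: runA => _ stepA; elim: t => [|t IHt] /andP[le_ut le_tN].
  by rewrite leqn0 in le_ut; rewrite (eqP le_ut).
case: (leqP u t) => [le_ut' | ]; last by move=> lt_tu; have -> : u = t.+1 by lia.
have [/elim_connect_subset sub _] := stepA t.+1 ltac:(lia).
by apply: subset_trans sub (IHt _); lia.
Qed.

Lemma valid_run_irredundant t : 1 <= t <= N -> irredundant (Dset t) (A t).
Proof. by case: runA => _ stepA /stepA[]. Qed.

Lemma valid_run_pos_inj u t : u < t <= N -> {in A t &, injective (pos u)}.
Proof.
case: u => [|u] lt_ut; first by move=> i j.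
apply: sub_in2 (irredundant_cinterval_inj (valid_run_irredundant _)); last by lia.
by apply/subsetP; apply: valid_run_subset; lia.
Qed.

Lemma card_moved u t : u < t <= N -> #|A t| - #|blocked u.+1| <= \sum_(i in A t) moved u i.
Proof.
move=> lt_ut; rewrite leq_subLR.
have -> : #|A t| = \sum_(i in A t) moved u i + #|[set i in A t | ~~ moved u i]|.
  rewrite -sum1dep_card -sum1_card (bigID (moved u)) /=; congr (_ + _).
  by rewrite big_mkcondr; apply: eq_bigr => i _; case: (moved u i).
rewrite addnC leq_add2r.
have pos_inj : {in [set i in A t | ~~ moved u i] &, injective (pos u)}.
  by move=> i j /setIdP[iA _] /setIdP[jA _]; apply: (valid_run_pos_inj lt_ut).
rewrite -(card_in_imset pos_inj); apply: subset_leq_card.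
by apply/subsetP => _ /imsetP[i /setIdP[_ stuck] ->]; rewrite inE.
Qed.

Lemma sum_moves t b : t <= N -> (forall u, u < t -> #|blocked u.+1| <= b) ->
  t * (#|A t| - b) <= \sum_(i in A t) moves t i.
Proof.
move=> le_tN few_blocked.
suff: forall u, u <= t -> u * (#|A t| - b) <= \sum_(i in A t) moves u i by apply.
elim=> [|u IHu] le_ut; first by rewrite mul0n.
rewrite /= big_split /= mulSnr; apply: leq_add; first exact/IHu/ltnW.
apply: leq_trans (leq_sub2l _ (few_blocked u le_ut)) (card_moved _).
by rewrite le_ut.
Qed.

(* With this encoding an agent that advanced at all N steps is back at its
   start with D = {i}; one step earlier, however, its arc was the whole tour. *)
Lemma valid_run_full_turn t i : 1 <= t <= N -> i \in A t -> N <= moves t i -> #|A t| <= 1.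
Proof.
move=> /andP[t_gt0 le_tN] iA full.
have [le_N1 | lt_1N] := leqP N 1; first by rewrite (leq_trans (max_card _)) ?card_ord.
case: t t_gt0 le_tN iA full => // u _ le_uN iA full.
have moves_u : moves u i = N.-1.
  by move: (moves_le u i) full => /=; case: (moved u i); lia.
have Di_full j : Dset u j \subset Dset u i.
  apply/subsetP => y _; rewrite /Dset mem_cinterval cdist_pos moves_u; last by lia.
  by have := cdist_lt i y; lia.
have sub_u : A u.+1 \subset A u by apply: valid_run_subset; lia.
have irr_u : irredundant (Dset u) (A u).
  by apply: valid_run_irredundant; move: (moves_le u i); lia.
rewrite -(cards1 i) subset_leq_card //; apply/subsetP => j jA; rewrite inE.
apply: contraT => ji.
by have := irredundant_subset irr_u (subsetP sub_u j jA) (subsetP sub_u i iA) ji; rewrite Di_full.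
Qed.

Lemma valid_run_bound t b : 1 <= t <= N -> (forall u, u < t -> #|blocked u.+1| <= b) ->
  #|A t| + t * (#|A t| - b) <= N * 2.
Proof.
move=> le_1tN few_blocked; have /andP[t_gt0 le_tN] := le_1tN.
case: (boolP [exists i in A t, N <= moves t i]) => [/exists_inP[i iA full] | partial].
  have le_A1 := valid_run_full_turn le_1tN iA full.
  have : t * (#|A t| - b) <= t * 1 by rewrite leq_mul2l (leq_trans (leq_subr _ _)) ?orbT.
  by lia.
have lt_moves i : i \in A t -> moves t i < N.
  by move=> iA; rewrite ltnNge; apply: contra partial => full; apply/exists_inP; exists i.
have sum_D := irredundant_cinterval_sum (valid_run_irredundant le_1tN).
rewrite (eq_bigr _ (fun i iA => card_Dset (lt_moves i iA))) in sum_D.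
have split_D : \sum_(i in A t) (moves t i).+1 = \sum_(i in A t) moves t i + #|A t|.
  by rewrite -sum1_card -big_split /=; apply: eq_bigr => i _; rewrite addn1.
by apply: leq_trans sum_D; rewrite split_D addnC leq_add2r sum_moves.
Qed.

End ValidRun.
End Exploration.

Theorem lemma8 (n k : nat) (V : finType) (T : {set {set V}}) (r0 : V)
  (v : nat -> V) (G : nat -> {set {set V}}) (A : nat -> {set 'I_(2 * (n - 1))})
  (t r : nat) :
  2 <= n -> #|V| = n ->
  is_tree T ->
  is_tour (2 * (n - 1)) v T r0 ->
  (forall t', 1 <= t' <= 2 * (n - 1) ->
     is_graph (G t') /\ #|T :\: G t'| <= k) ->
  valid_run v G A ->
  1 <= t <= 2 * (n - 1) ->
  2 * (n - 1) >= r -> r >= 2 * k + 1 ->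
  #|A t| >= r ->
  (t%:Q <= ((2 * (2 * (n - 1)))%N%:Q - r%:Q) / (r%:Q - (2 * k)%N%:Q))%R.
Proof.
move=> _ _ _ tour missing runA le_1tN _ lt_2k_r le_r_A.
have few_blocked u :
    u < t -> #|[set q : 'I_(2 * (n - 1)) | tour_edge v q \notin G u.+1]| <= k * 2.
  move=> lt_ut; have [_ missing_u] : is_graph (G u.+1) /\ #|T :\: G u.+1| <= k.
    by apply: missing; lia.
  exact: card_blocked tour missing_u.
have bound_r : r + t * (r - k * 2) <= 2 * (n - 1) * 2.
  apply: leq_trans (valid_run_bound runA le_1tN few_blocked).
  exact: leq_add le_r_A (leq_mul (leqnn t) (leq_sub2r _ le_r_A)).
rewrite ler_pdivlMr; last by rewrite subr_gt0 ltr_nat; lia.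
by rewrite -natrB -?natrM -?natrB ?ler_nat //; lia.
Qed.
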